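(* Let $l,u,\hbar$ satisfy the standing assumptions below. (i) If $S\in C^1_G(0,T)$, then the mappings $t\mapsto L_t(S_t)$ and $t\mapsto U_t(S_t)$ are continuous. In particular, $t\mapsto L_t(0)$ and $t\mapsto U_t(0)$ are continuous and bounded. (ii) If $t\in[0,T]$ and $X,X'\in L^1_G(\Omega_t)$, then $|L_t(X)-L_t(X')|\le\frac{2\overline{c}}{\underline{c}}\hat{\mathbb{E}}[|X-X'|]$ and $|U_t(X)-U_t(X')|\le\frac{2\overline{c}}{\underline{c}}\hat{\mathbb{E}}[|X-X'|]$.
   Context: Setting: $\hat{\mathbb{E}}$ is the $G$-expectation on $\Omega_T=\{\omega\in C([0,T];\mathbb{R}^d):\omega_0=0\}$; $L^1_G(\Omega_t)$ the completion of bounded Lipschitz cylinder functionals of the canonical process up to time $t$ under $\hat{\mathbb{E}}|\cdot|$; $C^1_G(0,T)$ the set of processes $S$ with $S_v\in L^1_G(\Omega_v)$ for all $v$ and $v\mapsto S_v$ continuous in $\hat{\mathbb{E}}|\cdot|$. Standing assumptions: $l,u:[0,T]\to\mathbb{R}$ bounded continuous with $\inf_t(u_t-l_t)>0$; $\hbar:[0,T]\times\Omega_T\times\mathbb{R}\to\mathbb{R}$ with $(t,y)\mapsto\hbar(t,y)$ uniformly continuous uniformly in $\omega$, $y\mapsto\hbar(t,y)$ strictly increasing, $\hbar(t,y)\in L^1_G(\Omega_T)$, $\hat{\mathbb{E}}[\lim_{y\downarrow-\infty}\hbar(t,y)]<\inf_sl_s<\sup_su_s<\hat{\mathbb{E}}[\lim_{y\uparrow\infty}\hbar(t,y)]$,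 $|\hbar(t,y)|\le C_\hbar(1+|y|)$, and $\underline{c}|y-y'|\le|\hbar(t,y)-\hbar(t,y')|\le\overline{c}|y-y'|$ with constants $C_\hbar>0$, $0<\underline{c}\le\overline{c}$. For $X\in L^1_G(\Omega_t)$, $\overline{H}(t,x,X):=\hat{\mathbb{E}}[\hbar(t,x+X-\hat{\mathbb{E}}[X])]$, $x\in\mathbb{R}$ (continuous, strictly increasing, with limits $\mp\infty$ at $\mp\infty$); $L_t(X):=\overline{H}^{-1}(t,\cdot,X)(l_t)$ and $U_t(X):=\overline{H}^{-1}(t,\cdot,X)(u_t)$. *)

From Stdlib Require Import Reals Lra ClassicalEpsilon.
Open Scope R_scope.

(* Abstract sublinear-expectation framework modelling the G-expectation
   setting.
   - [Om]      : the path space Omega_T (canonical process abstracted away)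
   - [Lsp t X] : "X belongs to L^1_G(Omega_t)"  (random variables are
                 represented by omega-wise functions Om -> R)
   - [E X]     : the (G-)expectation  \hat{E}[X]                          *)
Definition G_framework (Om : Type) (T : R)
  (Lsp : R -> (Om -> R) -> Prop) (E : (Om -> R) -> R) : Prop :=
  (forall s t X, 0 <= s -> s <= t -> t <= T -> Lsp s X -> Lsp t X) /\
  (forall t, 0 <= t <= T ->
     (forall c : R, Lsp t (fun _ => c)) /\
     (forall X Y, Lsp t X -> Lsp t Y -> Lsp t (fun w => X w + Y w)) /\
     (forall (a : R) X, Lsp t X -> Lsp t (fun w => a * X w)) /\
     (forall X, Lsp t X -> Lsp t (fun w => Rabs (X w)))) /\
  (forall (h : Om -> R -> R) (K : R) (Y : Om -> R),
     (forall y, Lsp T (fun w => h w y)) ->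
     (forall w y y', Rabs (h w y - h w y') <= K * Rabs (y - y')) ->
     Lsp T Y -> Lsp T (fun w => h w (Y w))) /\
  (forall X Y, Lsp T X -> Lsp T Y -> (forall w, X w <= Y w) -> E X <= E Y) /\
  (forall c : R, E (fun _ => c) = c) /\
  (forall X Y, Lsp T X -> Lsp T Y -> E (fun w => X w + Y w) <= E X + E Y) /\
  (forall (a : R) X, 0 <= a -> Lsp T X -> E (fun w => a * X w) = a * E X).

Definition cont_on_0T (T : R) (f : R -> R) : Prop :=
  forall t, 0 <= t <= T -> forall eps, 0 < eps ->
    exists delta, 0 < delta /\
      forall s, 0 <= s <= T -> Rabs (s - t) < delta -> Rabs (f s - f t) < eps.

Definition bounded_on_0T (T : R) (f : R -> R) : Prop :=
  exists M, forall t, 0 <= t <= T -> Rabs (f t) <= M.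

Definition C1G {Om : Type} (T : R) (Lsp : R -> (Om -> R) -> Prop)
  (E : (Om -> R) -> R) (S : R -> Om -> R) : Prop :=
  (forall v, 0 <= v <= T -> Lsp v (S v)) /\
  (forall v, 0 <= v <= T -> forall eps, 0 < eps ->
     exists delta, 0 < delta /\
       forall w, 0 <= w <= T -> Rabs (w - v) < delta ->
         E (fun om => Rabs (S w om - S v om)) < eps).

Definition Hbar {Om : Type} (E : (Om -> R) -> R) (hbar : R -> Om -> R -> R)
  (t x : R) (X : Om -> R) : R :=
  E (fun w => hbar t w (x + X w - E X)).

Definition Hbar_inv {Om : Type} (E : (Om -> R) -> R) (hbar : R -> Om -> R -> R)
  (t : R) (X : Om -> R) (a : R) : R :=
  epsilon (inhabits 0) (fun x => Hbar E hbar t x X = a).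

Definition Lop {Om : Type} (E : (Om -> R) -> R) (hbar : R -> Om -> R -> R)
  (l : R -> R) (t : R) (X : Om -> R) : R := Hbar_inv E hbar t X (l t).

Definition Uop {Om : Type} (E : (Om -> R) -> R) (hbar : R -> Om -> R -> R)
  (u : R -> R) (t : R) (X : Om -> R) : R := Hbar_inv E hbar t X (u t).

From Stdlib Require Import Reals Lra ClassicalEpsilon FunctionalExtensionality.
Open Scope R_scope.

(* For fixed t and X, the map x |-> \bar H(t,x,X) inherits from hbar the
   property of being increasing and bi-Lipschitz with constants c_lo, c_hi,
   because the sublinear expectation is monotone and translation invariant;
   so it is a bijection of R.  Inverting costs a factor 1/c_lo: if F x = c,
   G x' = c' and F is c_lo-lower-Lipschitz, then
   c_lo |x - x'| <= |F x' - G x'| + |c - c'|.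
   Both claims thus reduce to comparing \bar H at a single point: replacing X
   by X' moves it by at most 2 c_hi \hat E|X - X'| (once through X, once
   through \hat E[X]), and moving t moves it by the modulus of continuity of
   hbar in t, which is uniform in omega and y. *)

Definition incr_bilipschitz (f : R -> R) (a b : R) : Prop :=
  forall y y', y <= y' -> a * (y' - y) <= f y' - f y <= b * (y' - y).

Lemma incr_bilipschitz_of_abs (f : R -> R) (a b : R) :
  (forall y y', y < y' -> f y < f y') ->
  (forall y y', a * Rabs (y - y') <= Rabs (f y - f y') <= b * Rabs (y - y')) ->
  incr_bilipschitz f a b.
Proof.
  intros Hmono Hbl y y' Hyy.
  destruct (Rle_lt_or_eq_dec _ _ Hyy) as [Hlt | <-].
  - specialize (Hmono _ _ Hlt); destruct (Hbl y' y) as [Hlo Hhi].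
    rewrite !Rabs_pos_eq in Hlo, Hhi by lra; lra.
  - rewrite !Rminus_diag; lra.
Qed.

Section IncreasingBiLipschitz.
Variables (f : R -> R) (a b : R).
Hypotheses (Ha : 0 < a) (Hf : incr_bilipschitz f a b).

Lemma incr_bilipschitz_abs y y' :
  a * Rabs (y - y') <= Rabs (f y - f y') <= b * Rabs (y - y').
Proof.
  destruct (Rle_dec y y') as [Hyy | Hyy].
  - destruct (Hf y y' Hyy) as [Hlo Hhi].
    rewrite (Rabs_minus_sym y), (Rabs_minus_sym (f y)), !Rabs_pos_eq by nra; lra.
  - destruct (Hf y' y ltac:(lra)) as [Hlo Hhi].
    rewrite !Rabs_pos_eq by nra; lra.
Qed.

Lemma incr_bilipschitz_const_le : a <= b.
Proof. destruct (Hf 0 1); lra. Qed.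

Lemma incr_bilipschitz_continuous : continuity f.
Proof.
  assert (Hb : 0 < b) by (pose proof incr_bilipschitz_const_le; lra).
  intros x0 eps Heps.
  exists (eps / b); split; [apply Rdiv_lt_0_compat; lra|].
  intros x [_ Hx]; simpl in *; unfold R_dist in *.
  destruct (incr_bilipschitz_abs x x0) as [_ Hhi].
  apply (Rmult_lt_compat_l b) in Hx; [|lra].
  replace (b * (eps / b)) with eps in Hx by (field; lra).
  lra.
Qed.

Lemma incr_bilipschitz_surjective c : exists x, f x = c.
Proof.
  set (m := (Rabs (c - f 0) + 1) / a).
  assert (Hm : a * m = Rabs (c - f 0) + 1) by (unfold m; field; lra).
  assert (Hm0 : 0 < m) by (unfold m; pose proof (Rabs_pos (c - f 0));
                           apply Rdiv_lt_0_compat; lra).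
  assert (Hcont : continuity (fun x => f x - c)).
  { apply continuity_minus; [exact incr_bilipschitz_continuous | apply continuity_const].
    intros ? ?; reflexivity. }
  destruct (IVT (fun x => f x - c) (- m) m Hcont ltac:(lra)) as [z [_ Hz]].
  - destruct (Hf (- m) 0 ltac:(lra)).
    pose proof (Rle_abs (- (c - f 0))); rewrite Rabs_Ropp in *; lra.
  - destruct (Hf 0 m ltac:(lra)).
    pose proof (Rle_abs (c - f 0)); lra.
  - exists z; lra.
Qed.

End IncreasingBiLipschitz.

Lemma inverse_stability (f g : R -> R) (a x x' c c' : R) :
  (forall y y', a * Rabs (y - y') <= Rabs (f y - f y')) ->
  f x = c -> g x' = c' ->
  a * Rabs (x - x') <= Rabs (f x' - g x') + Rabs (c - c').
Proof.
  intros Hf Hx Hx'.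
  eapply Rle_trans; [apply Hf|].
  rewrite Hx, <- Hx'.
  replace (c - f x') with ((c - g x') + (g x' - f x')) by ring.
  rewrite (Rabs_minus_sym (f x')), Rplus_comm.
  apply Rabs_triang.
Qed.

Section SublinearExpectation.
Variables (Om : Type) (T : R) (Lsp : R -> (Om -> R) -> Prop) (E : (Om -> R) -> R).
Hypotheses (HG : G_framework Om T Lsp E) (HT : 0 <= T).

Lemma Lsp_const t c : 0 <= t <= T -> Lsp t (fun _ => c).
Proof. intros Ht; apply (proj1 (proj1 (proj2 HG) t Ht)). Qed.

Lemma Lsp_terminal t X : 0 <= t <= T -> Lsp t X -> Lsp T X.
Proof. intros Ht; apply (proj1 HG t T X); lra. Qed.

Let HTT : 0 <= T <= T. Proof. lra. Qed.

Lemma Lsp_add X Y : Lsp T X -> Lsp T Y -> Lsp T (fun w => X w + Y w).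
Proof. apply (proj1 (proj2 (proj1 (proj2 HG) T HTT))). Qed.

Lemma Lsp_scale a X : Lsp T X -> Lsp T (fun w => a * X w).
Proof. apply (proj1 (proj2 (proj2 (proj1 (proj2 HG) T HTT)))). Qed.

Lemma Lsp_abs X : Lsp T X -> Lsp T (fun w => Rabs (X w)).
Proof. apply (proj2 (proj2 (proj2 (proj1 (proj2 HG) T HTT)))). Qed.

Lemma Lsp_ext X Y : (forall w, X w = Y w) -> Lsp T X -> Lsp T Y.
Proof. intros HXY; replace Y with X; [trivial | now apply functional_extensionality]. Qed.

Lemma Lsp_sub X Y : Lsp T X -> Lsp T Y -> Lsp T (fun w => X w - Y w).
Proof.
  intros HX HY; apply (Lsp_ext (fun w => X w + -1 * Y w)); [intros; ring|].
  now apply Lsp_add, Lsp_scale.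
Qed.

Lemma Lsp_add_const X c : Lsp T X -> Lsp T (fun w => X w + c).
Proof. intros HX; now apply Lsp_add, Lsp_const. Qed.

Lemma Lsp_comp_lipschitz (h : Om -> R -> R) (K : R) (Y : Om -> R) :
  (forall y, Lsp T (fun w => h w y)) ->
  (forall w y y', Rabs (h w y - h w y') <= K * Rabs (y - y')) ->
  Lsp T Y -> Lsp T (fun w => h w (Y w)).
Proof. apply (proj1 (proj2 (proj2 HG))). Qed.

Lemma E_mono X Y : Lsp T X -> Lsp T Y -> (forall w, X w <= Y w) -> E X <= E Y.
Proof. apply (proj1 (proj2 (proj2 (proj2 HG)))). Qed.

Lemma E_const c : E (fun _ => c) = c.
Proof. apply (proj1 (proj2 (proj2 (proj2 (proj2 HG))))). Qed.

Lemma E_subadd X Y : Lsp T X -> Lsp T Y -> E (fun w => X w + Y w) <= E X + E Y.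
Proof. apply (proj1 (proj2 (proj2 (proj2 (proj2 (proj2 HG)))))). Qed.

Lemma E_pos_homog a X : 0 <= a -> Lsp T X -> E (fun w => a * X w) = a * E X.
Proof. apply (proj2 (proj2 (proj2 (proj2 (proj2 (proj2 HG)))))). Qed.

Lemma E_add_const X c : Lsp T X -> E (fun w => X w + c) = E X + c.
Proof.
  intros HX; apply Rle_antisym.
  - pose proof (E_subadd X (fun _ => c) HX (Lsp_const T c HTT)) as H.
    rewrite E_const in H; exact H.
  - assert (Hle : E X <= E (fun w => (X w + c) + - c)).
    { apply E_mono; [exact HX | now apply Lsp_add_const, Lsp_add_const |].
      intros; lra. }
    pose proof (E_subadd (fun w => X w + c) (fun _ => - c)
                  (Lsp_add_const X c HX) (Lsp_const T (- c) HTT)) as H.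
    rewrite E_const in H; lra.
Qed.

Lemma E_abs_sub X Y : Lsp T X -> Lsp T Y -> Rabs (E X - E Y) <= E (fun w => Rabs (X w - Y w)).
Proof.
  intros HX HY.
  assert (HD : Lsp T (fun w => Rabs (X w - Y w))) by now apply Lsp_abs, Lsp_sub.
  assert (HXY : E X <= E (fun w => Y w + Rabs (X w - Y w))).
  { apply E_mono; [exact HX | now apply Lsp_add |].
    intros w; pose proof (Rle_abs (X w - Y w)); lra. }
  assert (HYX : E Y <= E (fun w => X w + Rabs (X w - Y w))).
  { apply E_mono; [exact HY | now apply Lsp_add |].
    intros w; rewrite Rabs_minus_sym; pose proof (Rle_abs (Y w - X w)); lra. }
  pose proof (E_subadd _ _ HY HD); pose proof (E_subadd _ _ HX HD).
  apply Rabs_le; lra.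
Qed.

Lemma E_dist_le X Y e : Lsp T X -> Lsp T Y ->
  (forall w, Rabs (X w - Y w) <= e) -> Rabs (E X - E Y) <= e.
Proof.
  intros HX HY He.
  eapply Rle_trans; [now apply E_abs_sub|].
  rewrite <- (E_const e).
  apply E_mono; [now apply Lsp_abs, Lsp_sub | apply Lsp_const; lra | exact He].
Qed.

Variables (hbar : R -> Om -> R -> R) (c_lo c_hi : R).
Hypotheses (Hclo : 0 < c_lo) (Hchi : c_lo <= c_hi).

Definition hbar_regular (t : R) : Prop :=
  (forall w, incr_bilipschitz (hbar t w) c_lo c_hi) /\
  (forall y, Lsp T (fun w => hbar t w y)).

Lemma Lsp_Hbar_integrand t x X : hbar_regular t -> Lsp T X ->
  Lsp T (fun w => hbar t w (x + X w - E X)).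
Proof.
  intros [Hbl Hh] HX.
  apply (Lsp_comp_lipschitz (hbar t) c_hi); [exact Hh | | ].
  - intros w y y'; apply (incr_bilipschitz_abs _ c_lo); [exact Hclo | apply Hbl].
  - apply (Lsp_ext (fun w => X w + (x - E X))); [intros; ring|].
    now apply Lsp_add_const.
Qed.

Lemma Hbar_incr_bilipschitz t X : hbar_regular t -> Lsp T X ->
  incr_bilipschitz (fun x => Hbar E hbar t x X) c_lo c_hi.
Proof.
  intros Hreg HX x x' Hxx; unfold Hbar.
  pose proof (Lsp_Hbar_integrand t x X Hreg HX) as Hx.
  pose proof (Lsp_Hbar_integrand t x' X Hreg HX) as Hx'.
  assert (Hpt : forall w, c_lo * (x' - x) <= hbar t w (x' + X w - E X) - hbar t w (x + X w - E X)
                          <= c_hi * (x' - x)).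
  { intros w; replace (x' - x) with ((x' + X w - E X) - (x + X w - E X)) by ring.
    apply (proj1 Hreg); lra. }
  split.
  - assert (Hle : E (fun w => hbar t w (x + X w - E X) + c_lo * (x' - x))
                   <= E (fun w => hbar t w (x' + X w - E X))).
    { apply E_mono; [now apply Lsp_add_const | exact Hx' |].
      intros w; destruct (Hpt w); lra. }
    rewrite E_add_const in Hle by exact Hx; lra.
  - assert (Hle : E (fun w => hbar t w (x' + X w - E X))
                   <= E (fun w => hbar t w (x + X w - E X) + c_hi * (x' - x))).
    { apply E_mono; [exact Hx' | now apply Lsp_add_const |].
      intros w; destruct (Hpt w); lra. }
    rewrite E_add_const in Hle by exact Hx; lra.
Qed.

Lemma Hbar_inv_spec t X c : hbar_regular t -> Lsp T X ->
  Hbar E hbar t (Hbar_inv E hbar t X c) X = c.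
Proof.
  intros Hreg HX; unfold Hbar_inv.
  apply (epsilon_spec (inhabits 0) (fun x => Hbar E hbar t x X = c)).
  apply (incr_bilipschitz_surjective _ c_lo c_hi Hclo).
  now apply Hbar_incr_bilipschitz.
Qed.

Lemma Hbar_inv_stability t s X Y c c' :
  hbar_regular t -> hbar_regular s -> Lsp T X -> Lsp T Y ->
  let x' := Hbar_inv E hbar s Y c' in
  c_lo * Rabs (Hbar_inv E hbar t X c - x')
    <= Rabs (Hbar E hbar t x' X - Hbar E hbar s x' Y) + Rabs (c - c').
Proof.
  intros Hregt Hregs HX HY x'.
  apply (inverse_stability (fun y => Hbar E hbar t y X) (fun y => Hbar E hbar s y Y));
    [| now apply Hbar_inv_spec | now apply Hbar_inv_spec].
  intros y y'; apply (incr_bilipschitz_abs (fun x => Hbar E hbar t x X) c_lo c_hi Hclo).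
  now apply Hbar_incr_bilipschitz.
Qed.

Lemma Hbar_rv_lipschitz t x X Y : hbar_regular t -> Lsp T X -> Lsp T Y ->
  Rabs (Hbar E hbar t x X - Hbar E hbar t x Y) <= 2 * c_hi * E (fun w => Rabs (X w - Y w)).
Proof.
  intros Hreg HX HY; unfold Hbar.
  assert (HD : Lsp T (fun w => Rabs (X w - Y w))) by now apply Lsp_abs, Lsp_sub.
  set (D := E (fun w => Rabs (X w - Y w))).
  assert (HED : Rabs (E X - E Y) <= D) by now apply E_abs_sub.
  eapply Rle_trans; [apply E_abs_sub; now apply Lsp_Hbar_integrand|].
  apply Rle_trans with (E (fun w => c_hi * Rabs (X w - Y w) + c_hi * D)).
  - apply E_mono; [now apply Lsp_abs, Lsp_sub; apply Lsp_Hbar_integrand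
                  | now apply Lsp_add_const, Lsp_scale |].
    intros w.
    eapply Rle_trans; [apply (incr_bilipschitz_abs _ c_lo c_hi Hclo), (proj1 Hreg)|].
    rewrite <- Rmult_plus_distr_l; apply Rmult_le_compat_l; [lra|].
    replace (x + X w - E X - (x + Y w - E Y)) with ((X w - Y w) - (E X - E Y)) by ring.
    eapply Rle_trans; [apply Rabs_triang | rewrite Rabs_Ropp; lra].
  - rewrite E_add_const, E_pos_homog by (lra || assumption || now apply Lsp_scale).
    fold D; lra.
Qed.

Lemma Hbar_time_dist s t x X e : hbar_regular s -> hbar_regular t -> Lsp T X ->
  (forall w y, Rabs (hbar s w y - hbar t w y) <= e) ->
  Rabs (Hbar E hbar s x X - Hbar E hbar t x X) <= e.
Proof.
  intros Hregs Hregt HX He.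
  apply E_dist_le; [now apply Lsp_Hbar_integrand | now apply Lsp_Hbar_integrand |].
  intros w; apply He.
Qed.

Lemma Hbar_inv_lipschitz t X Y c : hbar_regular t -> Lsp T X -> Lsp T Y ->
  Rabs (Hbar_inv E hbar t X c - Hbar_inv E hbar t Y c)
    <= 2 * c_hi / c_lo * E (fun w => Rabs (X w - Y w)).
Proof.
  intros Hreg HX HY.
  pose proof (Hbar_inv_stability t t X Y c c Hreg Hreg HX HY) as Hstab; simpl in Hstab.
  pose proof (Hbar_rv_lipschitz t (Hbar_inv E hbar t Y c) X Y Hreg HX HY).
  rewrite Rminus_diag, Rabs_R0, Rplus_0_r in Hstab.
  apply (Rmult_le_reg_l c_lo); [exact Hclo|].
  replace (c_lo * (2 * c_hi / c_lo * E (fun w => Rabs (X w - Y w))))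
    with (2 * c_hi * E (fun w => Rabs (X w - Y w))) by (field; lra).
  lra.
Qed.

Lemma C1G_const c : C1G T Lsp E (fun _ _ => c).
Proof.
  split; [intros v Hv; now apply Lsp_const|].
  intros v Hv eps Heps; exists 1; split; [lra|].
  intros w Hw Hwv; rewrite Rminus_diag, Rabs_R0, E_const; exact Heps.
Qed.

Lemma Hbar_inv_continuous (S : R -> Om -> R) (a : R -> R) :
  (forall t, 0 <= t <= T -> hbar_regular t) ->
  (forall e, 0 < e -> exists d, 0 < d /\
     forall w t t' y, 0 <= t <= T -> 0 <= t' <= T -> Rabs (t - t') < d ->
       Rabs (hbar t w y - hbar t' w y) < e) ->
  C1G T Lsp E S -> cont_on_0T T a ->
  cont_on_0T T (fun t => Hbar_inv E hbar t (S t) (a t)).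
Proof.
  intros Hreg Hunif [HS HScont] Ha t Ht eps Heps.
  assert (HS' : forall v, 0 <= v <= T -> Lsp T (S v))
    by (intros v Hv; apply (Lsp_terminal v); auto).
  set (e := c_lo * eps / 4).
  assert (He : 0 < e) by (unfold e; nra).
  destruct (Hunif e He) as [dh [Hdh Hh]].
  destruct (Ha t Ht e He) as [da [Hda Ha']].
  destruct (HScont t Ht (e / c_hi) ltac:(apply Rdiv_lt_0_compat; lra)) as [dS [HdS HS'']].
  exists (Rmin dh (Rmin da dS)); split; [now repeat apply Rmin_pos|].
  intros s Hs Hst.
  pose proof (Rmin_l dh (Rmin da dS)); pose proof (Rmin_r dh (Rmin da dS)).
  pose proof (Rmin_l da dS); pose proof (Rmin_r da dS).
  set (x' := Hbar_inv E hbar t (S t) (a t)).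
  pose proof (Hbar_inv_stability s t (S s) (S t) (a s) (a t)
                (Hreg s Hs) (Hreg t Ht) (HS' s Hs) (HS' t Ht)) as Hstab; fold x' in Hstab.
  assert (Htime : Rabs (Hbar E hbar s x' (S s) - Hbar E hbar t x' (S s)) <= e).
  { apply Hbar_time_dist; auto.
    intros w y; apply Rlt_le, Hh; auto; lra. }
  assert (Hdev : Rabs (Hbar E hbar t x' (S s) - Hbar E hbar t x' (S t)) < 2 * e).
  { eapply Rle_lt_trans; [apply Hbar_rv_lipschitz; auto|].
    replace (2 * e) with (2 * c_hi * (e / c_hi)) by (field; lra).
    apply Rmult_lt_compat_l; [lra|].
    apply HS''; auto; lra. }
  assert (Hlev : Rabs (a s - a t) < e) by (apply Ha'; auto; lra).
  pose proof (Rabs_triang (Hbar E hbar s x' (S s) - Hbar E hbar t x' (S s))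
                          (Hbar E hbar t x' (S s) - Hbar E hbar t x' (S t))) as Htri.
  replace (Hbar E hbar s x' (S s) - Hbar E hbar t x' (S s)
           + (Hbar E hbar t x' (S s) - Hbar E hbar t x' (S t)))
    with (Hbar E hbar s x' (S s) - Hbar E hbar t x' (S t)) in Htri by ring.
  apply (Rmult_lt_reg_l c_lo); [exact Hclo|].
  unfold e in *; lra.
Qed.

Lemma Hbar_inv_zero_bounded (a : R -> R) (C : R) :
  (forall t, 0 <= t <= T -> hbar_regular t) ->
  (forall t w, 0 <= t <= T -> Rabs (hbar t w 0) <= C) ->
  bounded_on_0T T a -> bounded_on_0T T (fun t => Hbar_inv E hbar t (fun _ => 0) (a t)).
Proof.
  intros Hreg HC [M HM].
  exists ((M + C) / c_lo); intros t Ht; simpl.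
  assert (H0 : Lsp T (fun _ : Om => 0)) by (apply Lsp_const; lra).
  set (x := Hbar_inv E hbar t (fun _ => 0) (a t)).
  assert (Hx : Hbar E hbar t x (fun _ => 0) = a t) by (apply Hbar_inv_spec; auto).
  destruct (incr_bilipschitz_abs _ c_lo c_hi Hclo
              (Hbar_incr_bilipschitz t _ (Hreg t Ht) H0) x 0) as [Hlo _].
  assert (Hbar0 : Rabs (Hbar E hbar t 0 (fun _ => 0)) <= C).
  { unfold Hbar; rewrite <- (Rminus_0_r (E _)), <- (E_const 0) at 1.
    apply E_dist_le; [apply Lsp_Hbar_integrand; auto | exact H0 |].
    intros w; rewrite E_const, Rminus_0_r, Rplus_0_l, Rminus_0_r; now apply HC. }
  rewrite Hx, Rminus_0_r in Hlo.
  pose proof (Rabs_triang (a t) (- Hbar E hbar t 0 (fun _ => 0))) as Htri.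
  rewrite Rabs_Ropp in Htri; specialize (HM t Ht).
  apply (Rmult_le_reg_l c_lo); [exact Hclo|].
  replace (c_lo * ((M + C) / c_lo)) with (M + C) by (field; lra).
  unfold Rminus in Hlo; lra.
Qed.

End SublinearExpectation.

Theorem proposition3p6
  (Om : Type) (T : R) (Lsp : R -> (Om -> R) -> Prop) (E : (Om -> R) -> R)
  (l u : R -> R) (hbar : R -> Om -> R -> R) (C_h c_lo c_hi : R) :
  0 < T ->
  G_framework Om T Lsp E ->
  (* l, u bounded continuous on [0,T] with inf (u - l) > 0 *)
  cont_on_0T T l -> cont_on_0T T u ->
  bounded_on_0T T l -> bounded_on_0T T u ->
  (exists d, 0 < d /\ forall t, 0 <= t <= T -> d <= u t - l t) ->
  (* (t,y) |-> hbar(t,y) uniformly continuous, uniformly in omega *)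
  (forall eps, 0 < eps -> exists delta, 0 < delta /\
     forall w t t' y y', 0 <= t <= T -> 0 <= t' <= T ->
       Rabs (t - t') < delta -> Rabs (y - y') < delta ->
       Rabs (hbar t w y - hbar t' w y') < eps) ->
  (* strictly increasing in y *)
  (forall t w y y', 0 <= t <= T -> y < y' -> hbar t w y < hbar t w y') ->
  (* hbar(t,y) in L^1_G(Omega_T) *)
  (forall t y, 0 <= t <= T -> Lsp T (fun w => hbar t w y)) ->
  (* linear growth *)
  0 < C_h ->
  (forall t w y, 0 <= t <= T -> Rabs (hbar t w y) <= C_h * (1 + Rabs y)) ->
  (* bi-Lipschitz in y *)
  0 < c_lo -> c_lo <= c_hi ->
  (forall t w y y', 0 <= t <= T ->
     c_lo * Rabs (y - y') <= Rabs (hbar t w y - hbar t w y') /\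
     Rabs (hbar t w y - hbar t w y') <= c_hi * Rabs (y - y')) ->
  (* (i) *)
  ((forall S : R -> Om -> R, C1G T Lsp E S ->
      cont_on_0T T (fun t => Lop E hbar l t (S t)) /\
      cont_on_0T T (fun t => Uop E hbar u t (S t))) /\
   cont_on_0T T (fun t => Lop E hbar l t (fun _ => 0)) /\
   cont_on_0T T (fun t => Uop E hbar u t (fun _ => 0)) /\
   bounded_on_0T T (fun t => Lop E hbar l t (fun _ => 0)) /\
   bounded_on_0T T (fun t => Uop E hbar u t (fun _ => 0))) /\
  (* (ii) *)
  (forall t X X', 0 <= t <= T -> Lsp t X -> Lsp t X' ->
     Rabs (Lop E hbar l t X - Lop E hbar l t X')
       <= 2 * c_hi / c_lo * E (fun w => Rabs (X w - X' w)) /\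
     Rabs (Uop E hbar u t X - Uop E hbar u t X')
       <= 2 * c_hi / c_lo * E (fun w => Rabs (X w - X' w))).
Proof.
  intros HT HG Hlc Huc Hlb Hub _ Hunif Hincr HL _ Hgr Hclo Hchi Hbl.
  assert (HT0 : 0 <= T) by lra.
  assert (Hreg : forall t, 0 <= t <= T -> hbar_regular Om T Lsp hbar c_lo c_hi t).
  { intros t Ht; split; [intros w | intros y; now apply HL].
    apply incr_bilipschitz_of_abs; intros; [now apply Hincr | now apply Hbl]. }
  assert (Hunif_t : forall e, 0 < e -> exists d, 0 < d /\
            forall w t t' y, 0 <= t <= T -> 0 <= t' <= T -> Rabs (t - t') < d ->
              Rabs (hbar t w y - hbar t' w y) < e).
  { intros e He; destruct (Hunif e He) as [d [Hd Hh]]; exists d; split; [exact Hd|].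
    intros w t t' y Ht Ht' Htt; apply Hh; auto.
    rewrite Rminus_diag, Rabs_R0; exact Hd. }
  assert (Hbar0 : forall t w, 0 <= t <= T -> Rabs (hbar t w 0) <= C_h).
  { intros t w Ht; specialize (Hgr t w 0 Ht).
    rewrite Rabs_R0, Rplus_0_r, Rmult_1_r in Hgr; exact Hgr. }
  pose proof (Hbar_inv_continuous Om T Lsp E HG HT0 hbar c_lo c_hi Hclo Hchi) as Hcont.
  pose proof (Hbar_inv_zero_bounded Om T Lsp E HG HT0 hbar c_lo c_hi Hclo) as Hbound.
  pose proof (Hbar_inv_lipschitz Om T Lsp E HG HT0 hbar c_lo c_hi Hclo Hchi) as Hlip.
  pose proof (C1G_const Om T Lsp E HG 0) as HC0.
  split; [repeat split | intros t X X' Ht HX HX'; split].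
  - now apply Hcont.
  - now apply Hcont.
  - now apply Hcont.
  - now apply Hcont.
  - now apply (Hbound l C_h).
  - now apply (Hbound u C_h).
  - apply Hlip; auto; now apply (Lsp_terminal Om T Lsp E HG t).
  - apply Hlip; auto; now apply (Lsp_terminal Om T Lsp E HG t).
Qed.
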